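(* There exist Polish spaces $I_X, I_Y \subseteq \mathbb{C}$, a base $\mathcal{B}$ of $I_X$ consisting of clopen sets, and a continuous, open surjection $f : I_X \to I_Y$ such that $f(B)$ is clopen in $I_Y$ for every $B \in \mathcal{B}$, but $f$ is not closed--$F_\sigma$, i.e. there is a closed set $F \subseteq I_X$ such that $f(F)$ is not an $F_\sigma$ subset of $I_Y$.
   Context: A function is closed--$F_\sigma$ if it maps every closed set to an $F_\sigma$ set (a countable union of closed sets). *)

(* classical reals; the complex plane is modelled as R * R
   with the Euclidean metric. Subsets are predicates Cplx -> Prop, carrying
   the subspace topology. *)
From Stdlib Require Import Reals.
Open Scope R_scope.

Definition Cplx : Type := (R * R)%type.

Definition cdist (p q : Cplx) : R :=
  sqrt ((fst p - fst q)^2 + (snd p - snd q)^2).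

Definition subset (A B : Cplx -> Prop) : Prop := forall x, A x -> B x.

Definition open_in (S U : Cplx -> Prop) : Prop :=
  subset U S /\
  forall x, U x -> exists eps, eps > 0 /\
    forall y, S y -> cdist x y < eps -> U y.

Definition closed_in (S F : Cplx -> Prop) : Prop :=
  subset F S /\ open_in S (fun x => S x /\ ~ F x).

Definition clopen_in (S U : Cplx -> Prop) : Prop := open_in S U /\ closed_in S U.

Definition Fsigma_in (S A : Cplx -> Prop) : Prop :=
  exists Fn : nat -> (Cplx -> Prop),
    (forall n, closed_in S (Fn n)) /\
    forall x, A x <-> exists n, Fn n x.

Definition is_metric_on (S : Cplx -> Prop) (d : Cplx -> Cplx -> R) : Prop :=
  (forall x y, S x -> S y -> 0 <= d x y) /\
  (forall x y, S x -> S y -> (d x y = 0 <-> x = y)) /\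
  (forall x y, S x -> S y -> d x y = d y x) /\
  (forall x y z, S x -> S y -> S z -> d x z <= d x y + d y z).

Definition metric_compatible (S : Cplx -> Prop) (d : Cplx -> Cplx -> R) : Prop :=
  forall U, subset U S ->
    (open_in S U <->
     forall x, U x -> exists r, r > 0 /\ forall y, S y -> d x y < r -> U y).

Definition metric_complete (S : Cplx -> Prop) (d : Cplx -> Cplx -> R) : Prop :=
  forall u : nat -> Cplx, (forall n, S (u n)) ->
    (forall eps, eps > 0 -> exists N, forall m n,
        (m >= N)%nat -> (n >= N)%nat -> d (u m) (u n) < eps) ->
    exists l, S l /\
      forall eps, eps > 0 -> exists N, forall n, (n >= N)%nat -> d (u n) l < eps.

Definition separable_in (S : Cplx -> Prop) : Prop :=
  exists D : nat -> Cplx, (forall n, S (D n)) /\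
    forall U, open_in S U -> (exists x, U x) -> exists n, U (D n).

Definition polish (S : Cplx -> Prop) : Prop :=
  separable_in S /\
  exists d, is_metric_on S d /\ metric_compatible S d /\ metric_complete S d.

Definition is_base (S : Cplx -> Prop) (Bs : (Cplx -> Prop) -> Prop) : Prop :=
  (forall B, Bs B -> open_in S B) /\
  forall U x, open_in S U -> U x -> exists B, Bs B /\ B x /\ subset B U.

Definition image (f : Cplx -> Cplx) (A : Cplx -> Prop) : Cplx -> Prop :=
  fun y => exists x, A x /\ f x = y.

Definition maps_into (f : Cplx -> Cplx) (X Y : Cplx -> Prop) : Prop :=
  forall x, X x -> Y (f x).

Definition continuous_on (f : Cplx -> Cplx) (X Y : Cplx -> Prop) : Prop :=
  forall V, open_in Y V -> open_in X (fun x => X x /\ V (f x)).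

Definition open_map_on (f : Cplx -> Cplx) (X Y : Cplx -> Prop) : Prop :=
  forall U, open_in X U -> open_in Y (image f U).

Definition surjective_onto (f : Cplx -> Cplx) (X Y : Cplx -> Prop) : Prop :=
  forall y, Y y -> exists x, X x /\ f x = y.

(* Points are coded by pairs of binary sequences (a, b), embedded into the
   plane as (c a, c b), where c is the ternary Cantor map: codes agreeing on
   n digits have 3^-n-close images and codes disagreeing before digit n have
   images at least 3^-n apart, so the subspace topology is the prefix
   topology of the codes (open_char).
   - X consists of the codes whose second coordinate b has infinitely many
     ones (a copy of Cantor space times Baire space); it is Polish for the
     ultrametric comparing prefixes of a and "blocks" of b.
   - Y consists of the codes with b = 0 (a copy of Cantor space).
   - f forgets b; cylinders are a clopen base of X mapped onto cylinders of Y.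
   - F = {(a, b) : b <= a pointwise} is closed in X, and f(F) is the set of
     a with infinitely many ones, a dense G_delta with dense complement in
     Cantor space, which is not F_sigma by a Baire-category argument. *)
From Stdlib Require Import Reals Lra Lia Classical ClassicalEpsilon.
From Stdlib Require Import FunctionalExtensionality PropExtensionality Cantor.
Open Scope R_scope.

(* Binary sequences and the ternary Cantor map c a = sum 2 a_k / 3^(k+1). *)
Definition code := nat -> bool.
Definition zero : code := fun _ => false.
Definition b2r (x : bool) : R := if x then 1 else 0.
Definition shift (a : code) : code := fun k => a (S k).

Fixpoint cantor_sum (n : nat) (a : code) : R :=
  match n with O => 0 | S n => (2 * b2r (a O) + cantor_sum n (shift a)) / 3 end.

Lemma b2r_bounds x : 0 <= b2r x <= 1.
Proof. destruct x; simpl; lra. Qed.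

Lemma cantor_sum_bounds n : forall a, 0 <= cantor_sum n a <= 1.
Proof.
  induction n as [|n IH]; intro a; simpl; [lra|].
  pose proof (b2r_bounds (a O)); pose proof (IH (shift a)); lra.
Qed.

Lemma cantor_sum_incr n : forall a, cantor_sum n a <= cantor_sum (S n) a.
Proof.
  induction n as [|n IH]; intro a.
  - simpl; pose proof (b2r_bounds (a O)); lra.
  - change (cantor_sum (S n) a <= (2 * b2r (a O) + cantor_sum (S n) (shift a)) / 3).
    change (cantor_sum (S n) a) with ((2 * b2r (a O) + cantor_sum n (shift a)) / 3).
    pose proof (IH (shift a)); lra.
Qed.

Definition c (a : code) : R.
Proof.
  refine (proj1_sig (growing_cv (fun n => cantor_sum n a) _ _)).
  - intro n; apply cantor_sum_incr.
  - exists 1; intros x [n ->]; apply cantor_sum_bounds.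
Defined.

Lemma c_limit a : Un_cv (fun n => cantor_sum n a) (c a).
Proof. unfold c; destruct growing_cv; simpl; auto. Qed.

Lemma c_bounds a : 0 <= c a <= 1.
Proof.
  split.
  - pose proof (growing_ineq _ _ (fun n => cantor_sum_incr n a) (c_limit a) 0).
    simpl in *; lra.
  - destruct (Rle_dec (c a) 1) as [h|h]; auto.
    destruct (c_limit a (c a - 1)) as [N HN]; [lra|].
    specialize (HN N (le_n _)); unfold R_dist in HN.
    pose proof (cantor_sum_bounds N a); rewrite Rabs_left1 in HN; lra.
Qed.

Lemma c_shift a : c a = (2 * b2r (a O) + c (shift a)) / 3.
Proof.
  apply (UL_sequence (fun n => cantor_sum (S n) a)).
  - intros e He; destruct (c_limit a e He) as [N HN]; exists N; intros n Hn; apply HN; lia.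
  - intros e He; destruct (c_limit (shift a) e He) as [N HN]; exists N; intros n Hn.
    specialize (HN n Hn); unfold R_dist in *; simpl.
    replace ((2 * b2r (a O) + cantor_sum n (shift a)) / 3 - (2 * b2r (a O) + c (shift a)) / 3)
      with ((cantor_sum n (shift a) - c (shift a)) / 3) by field.
    unfold Rdiv; rewrite Rabs_mult, (Rabs_right (/3)) by lra; lra.
Qed.

Lemma c_zero : c zero = 0.
Proof. pose proof (c_shift zero) as h; simpl in h; change (shift zero) with zero in h; lra. Qed.

Definition agree (a b : code) (n : nat) : Prop := forall k, (k < n)%nat -> a k = b k.

Lemma agree_refl a n : agree a a n.
Proof. intros k _; reflexivity. Qed.
Lemma agree_sym a b n : agree a b n -> agree b a n.
Proof. intros H k hk; symmetry; auto. Qed.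
Lemma agree_trans a b e n : agree a b n -> agree b e n -> agree a e n.
Proof. intros H1 H2 k hk; rewrite H1; auto. Qed.
Lemma agree_le a b n m : agree a b n -> (m <= n)%nat -> agree a b m.
Proof. intros H h k hk; apply H; lia. Qed.
Lemma agree_all a b : (forall n, agree a b n) -> a = b.
Proof. intro H; apply functional_extensionality; intro k; apply (H (S k)); lia. Qed.

Lemma third_pow_pos n : 0 < (/3) ^ n.
Proof. apply pow_lt; lra. Qed.

Lemma third_pow_le_1 n : (/3) ^ n <= 1.
Proof. induction n as [|n IH]; simpl; [lra|]; pose proof (third_pow_pos n); nra. Qed.

Lemma c_shift_diff a b : a O = b O ->
  Rabs (c a - c b) = / 3 * Rabs (c (shift a) - c (shift b)).
Proof.
  intro e; rewrite (c_shift a), (c_shift b), e.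
  replace ((2 * b2r (b O) + c (shift a)) / 3 - (2 * b2r (b O) + c (shift b)) / 3)
    with (/3 * (c (shift a) - c (shift b))) by field.
  rewrite Rabs_mult, (Rabs_right (/3)) by lra; reflexivity.
Qed.

Lemma c_close n : forall a b, agree a b n -> Rabs (c a - c b) <= (/3) ^ n.
Proof.
  induction n as [|n IH]; intros a b H; simpl.
  - pose proof (c_bounds a); pose proof (c_bounds b); apply Rabs_le; lra.
  - rewrite c_shift_diff by (apply H; lia).
    assert (Hs : agree (shift a) (shift b) n) by (intros k Hk; apply H; lia).
    specialize (IH _ _ Hs); lra.
Qed.

Lemma c_far n : forall a b, ~ agree a b n -> (/3) ^ n <= Rabs (c a - c b).
Proof.
  induction n as [|n IH]; intros a b H; simpl.
  - exfalso; apply H; intros k Hk; lia.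
  - destruct (Bool.bool_dec (a O) (b O)) as [e|e].
    + rewrite c_shift_diff by exact e.
      assert (Hs : ~ agree (shift a) (shift b) n).
      { intro Hs; apply H; intros [|k] Hk; auto; apply Hs; lia. }
      specialize (IH _ _ Hs); lra.
    + rewrite (c_shift a), (c_shift b).
      pose proof (third_pow_le_1 n).
      pose proof (c_bounds (shift a)); pose proof (c_bounds (shift b)).
      destruct (a O), (b O); try congruence; simpl; unfold Rabs; destruct Rcase_abs; lra.
Qed.

Lemma c_inj a b : c a = c b -> a = b.
Proof.
  intro H; apply agree_all; intro n; apply NNPP; intro h.
  pose proof (c_far _ _ _ h); rewrite H, Rminus_diag, Rabs_R0 in *.
  pose proof (third_pow_pos n); lra.
Qed.

Definition hp (n : nat) : R := / 2 ^ n.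

Lemma hp_pos n : 0 < hp n.
Proof. unfold hp; apply Rinv_0_lt_compat, pow_lt; lra. Qed.

Lemma hp_le_iff m n : hp m <= hp n <-> (n <= m)%nat.
Proof.
  unfold hp; split; intro H.
  - destruct (Compare_dec.le_lt_dec n m) as [h|h]; auto; exfalso.
    assert (hlt : 2 ^ m < 2 ^ n) by (apply Rlt_pow; [lra|lia]).
    assert (0 < 2 ^ m) by (apply pow_lt; lra).
    apply Rinv_lt_contravar in hlt; [lra|nra].
  - apply Rinv_le_contravar; [apply pow_lt; lra | apply Rle_pow; [lra|lia]].
Qed.

Lemma third_pow_le_hp n : (/3) ^ n <= hp n.
Proof.
  unfold hp; rewrite <- pow_inv; apply pow_incr; split; [lra|].
  apply Rinv_le_contravar; lra.
Qed.

Lemma hp_small r : 0 < r -> exists n, hp n < r.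
Proof.
  intro Hr; destruct (pow_lt_1_zero (/2) ltac:(rewrite Rabs_right; lra) r Hr) as [N HN].
  exists N; specialize (HN N (le_n _)); unfold hp; rewrite <- pow_inv.
  rewrite Rabs_right in HN; [lra|apply Rle_ge, pow_le; lra].
Qed.

(* A level predicate Q : nat -> Prop is downward closed ("agree at level j");
   its distance is 2^-J for the largest level J it reaches, 0 if it reaches
   all levels. *)
Definition downc (Q : nat -> Prop) : Prop := Q O /\ forall j, Q (S j) -> Q j.

Definition level_dist (Q : nat -> Prop) : R :=
  match excluded_middle_informative (forall j, Q j) with
  | left _ => 0
  | right _ => hp (epsilon (inhabits O) (fun j => Q j /\ ~ Q (S j)))
  end.

Lemma downc_le Q : downc Q -> forall i j, (i <= j)%nat -> Q j -> Q i.
Proof. intros [_ H] i j Hij; induction Hij; auto. Qed.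

Lemma level_dist_cases Q : downc Q ->
  (level_dist Q = 0 /\ forall j, Q j) \/
  exists J, level_dist Q = hp J /\ forall j, Q j <-> (j <= J)%nat.
Proof.
  intro D; unfold level_dist.
  destruct excluded_middle_informative as [h|h]; [left; auto|right].
  assert (ex : exists J, Q J /\ ~ Q (S J)).
  { apply not_all_ex_not in h; destruct h as [m hm]; induction m as [|m IH].
    - exfalso; apply hm; destruct D; auto.
    - destruct (classic (Q m)); eauto. }
  pose proof (epsilon_spec (inhabits O) _ ex) as [h1 h2].
  set (J := epsilon _ _) in *; exists J; split; auto.
  intro j; split; intro Hj.
  - destruct (Compare_dec.le_lt_dec j J); auto.
    exfalso; apply h2, (downc_le Q D _ j); auto.
  - apply (downc_le Q D _ J); auto.
Qed.

Lemma level_dist_le Q : downc Q -> forall j, level_dist Q <= hp j <-> Q j.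
Proof.
  intros D j; destruct (level_dist_cases Q D) as [[h1 h2]|[J [h1 h2]]].
  - rewrite h1; split; auto; intros _; apply Rlt_le, hp_pos.
  - rewrite h1, h2, hp_le_iff; tauto.
Qed.

Lemma level_dist_lt Q j : downc Q -> level_dist Q < hp j -> Q j.
Proof. intros D h; apply level_dist_le; auto; lra. Qed.

Lemma level_dist_nonneg Q : downc Q -> 0 <= level_dist Q.
Proof.
  intro D; destruct (level_dist_cases Q D) as [[h1 _]|[J [h1 _]]]; rewrite h1;
    [lra|apply Rlt_le, hp_pos].
Qed.

Lemma level_dist_zero Q : downc Q -> (level_dist Q = 0 <-> forall j, Q j).
Proof.
  intro D; destruct (level_dist_cases Q D) as [[h1 h2]|[J [h1 h2]]]; rewrite h1.
  - split; auto.
  - split; intro h.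
    + pose proof (hp_pos J); lra.
    + specialize (h (S J)); apply h2 in h; lia.
Qed.

Lemma level_dist_triangle Q1 Q2 Q3 : downc Q1 -> downc Q2 -> downc Q3 ->
  (forall j, Q1 j -> Q2 j -> Q3 j) -> level_dist Q3 <= level_dist Q1 + level_dist Q2.
Proof.
  intros D1 D2 D3 H.
  pose proof (level_dist_nonneg _ D1); pose proof (level_dist_nonneg _ D2).
  destruct (Rle_dec (level_dist Q1) (level_dist Q2)) as [h|h].
  - destruct (level_dist_cases Q2 D2) as [[b1 b2]|[J [b1 b2]]].
    + assert (level_dist Q1 = 0) by lra.
      assert (level_dist Q3 = 0); [|lra].
      apply level_dist_zero; auto; intro j; apply H; auto.
      apply level_dist_zero; auto.
    + assert (level_dist Q3 <= hp J); [|lra].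
      apply level_dist_le; auto; apply H; [|apply b2; lia].
      apply level_dist_le; auto; lra.
  - destruct (level_dist_cases Q1 D1) as [[a1 a2]|[J [a1 a2]]]; [lra|].
    assert (level_dist Q3 <= hp J); [|lra].
    apply level_dist_le; auto; apply H; [apply a2; lia|].
    apply level_dist_le; auto; lra.
Qed.

Lemma level_dist_ext Q1 Q2 : (forall j, Q1 j <-> Q2 j) -> level_dist Q1 = level_dist Q2.
Proof.
  intro H; replace Q2 with Q1; auto.
  apply functional_extensionality; intro j; apply propositional_extensionality; auto.
Qed.

Lemma downc_agree a b : downc (agree a b).
Proof. split; [intros k h; lia|intros j H; apply (agree_le _ _ (S j)); auto]. Qed.

Fixpoint cnt (b : code) (n : nat) : nat :=
  match n with O => O | S n => (cnt b n + (if b n then 1 else 0))%nat end.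

Definition inf (b : code) : Prop := forall j, exists n, (j <= cnt b n)%nat.

Lemma cnt_le b n : (cnt b n <= n)%nat.
Proof. induction n; simpl; [lia|destruct (b n); lia]. Qed.

Lemma cnt_mono b n m : (n <= m)%nat -> (cnt b n <= cnt b m)%nat.
Proof. induction 1; simpl; [lia|destruct (b m); lia]. Qed.

Lemma agree_cnt b b' n : agree b b' n -> cnt b n = cnt b' n.
Proof.
  induction n as [|n IH]; intro H; simpl; auto.
  rewrite IH by (apply (agree_le _ _ (S n)); auto); rewrite (H n) by lia; auto.
Qed.

Lemma cnt_tail b K : (forall k, (K <= k)%nat -> b k = true) ->
  forall j, (j <= cnt b (K + j))%nat.
Proof.
  intros H j; induction j; [lia|].
  rewrite Nat.add_succ_r; simpl; rewrite H by lia; lia.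
Qed.

(* Viewing b as the sequence of lengths of the blocks ending in a one, level j
   of blocks_agree says that b and b' have the same first j blocks. This is the
   Baire-space ultrametric, for which the codes with infinitely many ones are
   complete. *)
Definition blocks_agree (b b' : code) (j : nat) : Prop :=
  b = b' \/ exists n, (j <= cnt b n)%nat /\ agree b b' n.

Lemma downc_blocks b b' : downc (blocks_agree b b').
Proof.
  split; [right; exists O; split; [lia|intros k h; lia]|].
  intros j [h|[n [h1 h2]]]; [left; auto|right; exists n; split; auto; lia].
Qed.

Lemma blocks_sym b b' j : blocks_agree b b' j -> blocks_agree b' b j.
Proof.
  intros [h|[n [h1 h2]]]; [left; auto|right; exists n; split].
  - rewrite <- (agree_cnt _ _ _ h2); auto.
  - apply agree_sym; auto.
Qed.

Lemma blocks_trans b b' b'' j :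
  blocks_agree b b' j -> blocks_agree b' b'' j -> blocks_agree b b'' j.
Proof.
  intros [h|[n1 [h1 h2]]] H2; [subst; auto|].
  destruct H2 as [h|[n2 [g1 g2]]]; [subst; right; eauto|right].
  destruct (Nat.le_ge_cases n1 n2).
  - exists n1; split; auto; apply (agree_trans _ b'); auto; apply (agree_le _ _ n2); auto.
  - exists n2; split.
    + rewrite (agree_cnt b b' n2); auto; apply (agree_le _ _ n1); auto.
    + apply (agree_trans _ b'); auto; apply (agree_le _ _ n1); auto.
Qed.

(* j blocks are at least j digits. *)
Lemma blocks_agree_prefix b b' j : blocks_agree b b' j -> agree b b' j.
Proof.
  intros [h|[n [h1 h2]]]; [subst; apply agree_refl|].
  apply (agree_le _ _ n); auto; pose proof (cnt_le b n); lia.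
Qed.

Lemma blocks_all b b' : (forall j, blocks_agree b b' j) -> b = b'.
Proof. intro H; apply agree_all; intro n; apply blocks_agree_prefix; auto. Qed.

Definition phi (a b : code) : Cplx := (c a, c b).
Definition Sp (P : code -> Prop) : Cplx -> Prop := fun p => exists a b, P b /\ p = phi a b.

Lemma phi_inj a b a' b' : phi a b = phi a' b' -> a = a' /\ b = b'.
Proof. unfold phi; intro H; inversion H; split; apply c_inj; auto. Qed.

Lemma cdist_ge_fst p q : Rabs (fst p - fst q) <= cdist p q.
Proof.
  unfold cdist; rewrite <- sqrt_Rsqr_abs; apply sqrt_le_1_alt; rewrite <- !Rsqr_pow2.
  pose proof (Rle_0_sqr (snd p - snd q)); lra.
Qed.

Lemma cdist_ge_snd p q : Rabs (snd p - snd q) <= cdist p q.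
Proof.
  unfold cdist; rewrite <- sqrt_Rsqr_abs; apply sqrt_le_1_alt; rewrite <- !Rsqr_pow2.
  pose proof (Rle_0_sqr (fst p - fst q)); lra.
Qed.

Lemma cdist_le p q : cdist p q <= Rabs (fst p - fst q) + Rabs (snd p - snd q).
Proof.
  unfold cdist; set (x := fst p - fst q); set (y := snd p - snd q).
  pose proof (Rabs_pos x); pose proof (Rabs_pos y).
  rewrite <- (sqrt_Rsqr (Rabs x + Rabs y)) by lra.
  apply sqrt_le_1_alt; rewrite <- !Rsqr_pow2, Rsqr_plus, <- !Rsqr_abs.
  pose proof (Rmult_le_pos _ _ H H0); lra.
Qed.

Lemma open_char P U : open_in (Sp P) U <-> subset U (Sp P) /\
  forall a b, P b -> U (phi a b) -> exists n, forall a' b', P b' ->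
    agree a a' n -> agree b b' n -> U (phi a' b').
Proof.
  split.
  - intros [HS HU]; split; auto; intros a b Hb Hx.
    destruct (HU _ Hx) as [eps [He Heps]].
    destruct (hp_small (eps / 2)) as [n Hn]; [lra|].
    exists n; intros a' b' H' h1 h2; apply Heps; [exists a', b'; auto|].
    pose proof (cdist_le (phi a b) (phi a' b')); simpl in *.
    pose proof (c_close _ _ _ h1); pose proof (c_close _ _ _ h2).
    pose proof (third_pow_le_hp n); lra.
  - intros [HS HU]; split; auto; intros x Hx.
    destruct (HS _ Hx) as [a [b [Hb ->]]].
    destruct (HU a b Hb Hx) as [n Hn].
    exists ((/3) ^ n); split; [apply third_pow_pos|].
    intros y [a' [b' [H' ->]]] hd; apply Hn; auto; apply NNPP; intro h;
      pose proof (c_far _ _ _ h).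
    + pose proof (cdist_ge_fst (phi a b) (phi a' b')); simpl in *; lra.
    + pose proof (cdist_ge_snd (phi a b) (phi a' b')); simpl in *; lra.
Qed.

Lemma closed_char P F : closed_in (Sp P) F <-> subset F (Sp P) /\
  forall a b, P b -> ~ F (phi a b) -> exists n, forall a' b', P b' ->
    agree a a' n -> agree b b' n -> ~ F (phi a' b').
Proof.
  unfold closed_in; rewrite open_char; split.
  - intros [h1 [_ h3]]; split; auto; intros a b Hb Hn.
    destruct (h3 a b Hb) as [n Hn']; [split; [exists a, b|]; auto|].
    exists n; intros; apply Hn'; auto.
  - intros [h1 h2]; split; auto; split; [intros x [hx _]; auto|].
    intros a b Hb [_ Hn]; destruct (h2 a b Hb Hn) as [n Hn'].
    exists n; intros; split; auto; exists a', b'; auto.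
Qed.

Definition cyl (P : code -> Prop) (a0 b0 : code) (n : nat) : Cplx -> Prop :=
  fun p => exists a b, P b /\ p = phi a b /\ agree a0 a n /\ agree b0 b n.

Lemma cyl_clopen P a0 b0 n : clopen_in (Sp P) (cyl P a0 b0 n).
Proof.
  assert (Hsub : subset (cyl P a0 b0 n) (Sp P)) by (intros p [a [b [h [e _]]]]; exists a, b; auto).
  split; [apply open_char|apply closed_char]; split; auto.
  - intros a b Hb [a1 [b1 [_ [e [h1 h2]]]]]; apply phi_inj in e as [<- <-].
    exists n; intros a' b' H' g1 g2; exists a', b'; repeat split; auto;
      eapply agree_trans; eauto.
  - intros a b Hb Hn; exists n; intros a' b' H' g1 g2 [a1 [b1 [_ [e [h1 h2]]]]].
    apply phi_inj in e as [<- <-]; apply Hn; exists a, b; repeat split; auto;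
      eapply agree_trans; eauto; apply agree_sym; auto.
Qed.

Lemma cyl_base P : is_base (Sp P) (fun B => exists a0 b0 n, B = cyl P a0 b0 n).
Proof.
  split; [intros B [a0 [b0 [n ->]]]; apply cyl_clopen|].
  intros U x HU Hx; apply open_char in HU as [HS HU].
  destruct (HS _ Hx) as [a [b [Hb ->]]]; destruct (HU a b Hb Hx) as [n Hn].
  exists (cyl P a b n); split; [eauto|split].
  - exists a, b; repeat split; auto; apply agree_refl.
  - intros p [a' [b' [H' [-> [h1 h2]]]]]; apply Hn; auto.
Qed.

(* Decoding the coordinates of a point of the plane (meaningful on codes). *)
Definition decode (x : R) : code := epsilon (inhabits zero) (fun a => c a = x).

Lemma decode_c a : decode (c a) = a.
Proof.
  apply c_inj; unfold decode.
  apply (epsilon_spec (inhabits zero) (fun a0 => c a0 = c a)); eauto.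
Qed.

Definition d (p q : Cplx) : R :=
  level_dist (agree (decode (fst p)) (decode (fst q))) +
  level_dist (blocks_agree (decode (snd p)) (decode (snd q))).

Lemma d_phi a b a' b' :
  d (phi a b) (phi a' b') = level_dist (agree a a') + level_dist (blocks_agree b b').
Proof. unfold d, phi; simpl; rewrite !decode_c; auto. Qed.

Lemma d_small a b a' b' j : d (phi a b) (phi a' b') < hp j ->
  agree a a' j /\ blocks_agree b b' j.
Proof.
  rewrite d_phi; intro h.
  pose proof (level_dist_nonneg _ (downc_agree a a')).
  pose proof (level_dist_nonneg _ (downc_blocks b b')).
  split; apply level_dist_lt; auto using downc_agree, downc_blocks; lra.
Qed.

Lemma d_le a b a' b' j : agree a a' j -> blocks_agree b b' j ->
  d (phi a b) (phi a' b') <= 2 * hp j.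
Proof.
  rewrite d_phi; intros h1 h2.
  apply (level_dist_le _ (downc_agree a a')) in h1.
  apply (level_dist_le _ (downc_blocks b b')) in h2; lra.
Qed.

Lemma d_metric P : is_metric_on (Sp P) d.
Proof.
  split; [|split; [|split]].
  - intros x y [a [b [_ ->]]] [a' [b' [_ ->]]]; rewrite d_phi.
    pose proof (level_dist_nonneg _ (downc_agree a a')).
    pose proof (level_dist_nonneg _ (downc_blocks b b')); lra.
  - intros x y [a [b [_ ->]]] [a' [b' [_ ->]]]; rewrite d_phi.
    pose proof (level_dist_nonneg _ (downc_agree a a')).
    pose proof (level_dist_nonneg _ (downc_blocks b b')).
    split; intro Hd.
    + assert (ha : level_dist (agree a a') = 0) by lra.
      assert (hb : level_dist (blocks_agree b b') = 0) by lra.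
      f_equal.
      * apply agree_all, (proj1 (level_dist_zero _ (downc_agree a a')) ha).
      * apply blocks_all, (proj1 (level_dist_zero _ (downc_blocks b b')) hb).
    + apply phi_inj in Hd as [<- <-].
      rewrite (proj2 (level_dist_zero _ (downc_agree a a)) (agree_refl a)).
      rewrite (proj2 (level_dist_zero _ (downc_blocks b b)) (fun j => or_introl eq_refl)).
      lra.
  - intros x y [a [b [_ ->]]] [a' [b' [_ ->]]]; rewrite !d_phi.
    f_equal; apply level_dist_ext; intro j; split; auto using agree_sym, blocks_sym.
  - intros x y z [a [b [_ ->]]] [a' [b' [_ ->]]] [a'' [b'' [_ ->]]]; rewrite !d_phi.
    assert (level_dist (agree a a'') <= level_dist (agree a a') + level_dist (agree a' a''))
      by (apply level_dist_triangle; eauto using downc_agree, agree_trans).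
    assert (level_dist (blocks_agree b b'') <=
            level_dist (blocks_agree b b') + level_dist (blocks_agree b' b''))
      by (apply level_dist_triangle; eauto using downc_blocks, blocks_trans).
    lra.
Qed.

Lemma blocks_agree_beyond b b' n : blocks_agree b b' (S (cnt b n)) -> agree b b' n.
Proof.
  intros [<-|[n' [h1 h2]]]; [apply agree_refl|].
  apply (agree_le _ _ n'); auto.
  destruct (Compare_dec.le_lt_dec n n'); auto; pose proof (cnt_mono b n' n); lia.
Qed.

(* On the codes satisfying P, block agreement is detected by finite prefixes,
   i.e. the block topology is the prefix topology. *)
Definition blocks_locally_prefix (P : code -> Prop) : Prop :=
  forall b, P b -> forall j, exists n, forall b', P b' -> agree b b' n -> blocks_agree b b' j.

Lemma d_compat P : blocks_locally_prefix P -> metric_compatible (Sp P) d.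
Proof.
  intros HP U HU; rewrite open_char; split.
  - intros [_ H] x Hx; destruct (HU _ Hx) as [a [b [Hb ->]]].
    destruct (H a b Hb Hx) as [n Hn].
    set (j := Nat.max n (S (cnt b n))); exists (hp j); split; [apply hp_pos|].
    intros y [a' [b' [H' ->]]] hd; apply d_small in hd as [h1 h2].
    apply Hn; auto; [apply (agree_le _ _ j); auto; lia|].
    apply blocks_agree_beyond, (downc_le _ (downc_blocks b b') _ j); auto; lia.
  - intro H; split; auto; intros a b Hb Hx.
    destruct (H _ Hx) as [r [Hr Hball]].
    destruct (hp_small (r / 2)) as [j Hj]; [lra|].
    destruct (HP b Hb j) as [n0 Hn0].
    exists (Nat.max j n0); intros a' b' H' h1 h2; apply Hball; [exists a', b'; auto|].
    assert (d (phi a b) (phi a' b') <= 2 * hp j); [|lra].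
    apply d_le; [apply (agree_le _ _ (Nat.max j n0)); auto; lia|].
    apply Hn0; auto; apply (agree_le _ _ (Nat.max j n0)); auto; lia.
Qed.

Definition cauchy_in (Q : code -> code -> nat -> Prop) (B : nat -> code) : Prop :=
  forall j, exists N, forall m n, (N <= m)%nat -> (N <= n)%nat -> Q (B m) (B n) j.

Definition converges_in (Q : code -> code -> nat -> Prop) (B : nat -> code) (l : code) : Prop :=
  forall j, exists N, forall n, (N <= n)%nat -> Q (B n) l j.

Fixpoint running_max (N : nat -> nat) (j : nat) : nat :=
  match j with O => N O | S j => Nat.max (running_max N j) (N (S j)) end.

Lemma monotone_modulus (Pm : nat -> nat -> Prop) :
  (forall j N N', (N <= N')%nat -> Pm j N -> Pm j N') -> (forall j, exists N, Pm j N) ->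
  exists M : nat -> nat, (forall i j, (i <= j)%nat -> (M i <= M j)%nat) /\ forall j, Pm j (M j).
Proof.
  intros Hup Hex; set (N := fun j => epsilon (inhabits O) (Pm j)).
  assert (HN : forall j, Pm j (N j)) by (intro j; apply epsilon_spec, Hex).
  exists (running_max N); split.
  - induction 1; simpl; lia.
  - intro j; apply Hup with (N j); auto; destruct j; simpl; lia.
Qed.

Lemma prefix_limit (A : nat -> code) : cauchy_in agree A -> exists l, converges_in agree A l.
Proof.
  intro HC.
  destruct (monotone_modulus
              (fun j N => forall m n, (N <= m)%nat -> (N <= n)%nat -> agree (A m) (A n) j))
    as [M [Hmono HM]]; [intros j N N' h H m n hm hn; apply H; lia|exact HC|].
  exists (fun i => A (M (S i)) i); intros j; exists (M j); intros n hn i hi.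
  pose proof (Hmono (S i) j hi); apply (HM (S i)); lia.
Qed.

Definition blocks_complete (P : code -> Prop) : Prop :=
  forall B, (forall n, P (B n)) -> cauchy_in blocks_agree B ->
    exists l, P l /\ converges_in blocks_agree B l.

Lemma d_complete P : blocks_complete P -> metric_complete (Sp P) d.
Proof.
  intros HP u Hu Hc.
  set (A := fun n => decode (fst (u n))); set (B := fun n => decode (snd (u n))).
  assert (Hu' : forall n, P (B n) /\ u n = phi (A n) (B n)).
  { intro n; unfold A, B; destruct (Hu n) as [a [b [Hb ->]]]; simpl; rewrite !decode_c; auto. }
  assert (HC : forall j, exists N, forall m n, (N <= m)%nat -> (N <= n)%nat ->
                 agree (A m) (A n) j /\ blocks_agree (B m) (B n) j).
  { intro j; destruct (Hc (hp j) (hp_pos j)) as [N HN]; exists N; intros m n hm hn.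
    apply d_small; rewrite <- (proj2 (Hu' m)), <- (proj2 (Hu' n)); auto. }
  destruct (prefix_limit A) as [la Hla];
    [intro j; destruct (HC j) as [N HN]; exists N; intros; apply HN; auto|].
  destruct (HP B) as [lb [Hlb Hlb']];
    [intro n; apply Hu'|intro j; destruct (HC j) as [N HN]; exists N; intros; apply HN; auto|].
  exists (phi la lb); split; [exists la, lb; auto|].
  intros eps He; destruct (hp_small (eps / 2)) as [j Hj]; [lra|].
  destruct (Hla j) as [N1 H1]; destruct (Hlb' j) as [N2 H2].
  exists (Nat.max N1 N2); intros n hn; rewrite (proj2 (Hu' n)).
  pose proof (d_le (A n) (B n) la lb j (H1 n ltac:(lia)) (H2 n ltac:(lia))); lra.
Qed.

Lemma separable_coded P (E : nat -> code * code) :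
  (forall m, P (snd (E m))) ->
  (forall a b, P b -> forall n, exists m, agree a (fst (E m)) n /\ agree b (snd (E m)) n) ->
  separable_in (Sp P).
Proof.
  intros HE1 HE2; exists (fun m => phi (fst (E m)) (snd (E m))); split.
  - intro m; exists (fst (E m)), (snd (E m)); auto.
  - intros U HU [x Hx]; apply open_char in HU as [HS HU].
    destruct (HS _ Hx) as [a [b [Hb ->]]]; destruct (HU a b Hb Hx) as [n Hn].
    destruct (HE2 a b Hb n) as [m [h1 h2]]; exists m; apply Hn; auto.
Qed.

Definition binary (m : nat) : code := fun k => Nat.testbit m k.

Lemma binary_prefix N : forall t : code, exists m, agree t (binary m) N.
Proof.
  induction N as [|N IH]; intro t; [exists O; intros k h; lia|].
  destruct (IH (shift t)) as [m Hm].
  exists (2 * m + (if t O then 1 else 0))%nat; intros [|k] hk; unfold binary.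
  - destruct (t O); [rewrite Nat.testbit_odd_0|rewrite Nat.add_0_r, Nat.testbit_even_0]; auto.
  - destruct (t O); [rewrite Nat.testbit_odd_succ|rewrite Nat.add_0_r, Nat.testbit_even_succ];
      try lia; apply (Hm k); lia.
Qed.

Lemma polish_coded P :
  blocks_locally_prefix P -> blocks_complete P -> separable_in (Sp P) -> polish (Sp P).
Proof. intros H1 H2 H3; split; auto; exists d; auto using d_metric, d_compat, d_complete. Qed.

Definition X : Cplx -> Prop := Sp inf.

Lemma inf_locally_prefix : blocks_locally_prefix inf.
Proof.
  intros b Hb j; destruct (Hb j) as [n hn]; exists n; intros b' _ h; right; eauto.
Qed.

(* Codes with infinitely many ones are complete for the block ultrametric:
   the first j blocks of a Cauchy sequence eventually stabilize. *)
Lemma inf_blocks_complete : blocks_complete inf.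
Proof.
  intros B HB HC.
  destruct (prefix_limit B) as [l Hl].
  { intro j; destruct (HC j) as [N HN]; exists N; intros; apply blocks_agree_prefix; auto. }
  assert (Hconv : converges_in blocks_agree B l).
  { intro j; destruct (HC j) as [N HN]; exists N; intros n hn.
    apply blocks_trans with (B N); [apply HN; lia|].
    destruct (HB N j) as [n0 hn0]; destruct (Hl n0) as [N' HN'].
    assert (ha : agree (B (Nat.max N N')) l n0) by (apply HN'; lia).
    destruct (HN N (Nat.max N N')) as [e|[n' [h1 h2]]]; try lia.
    - right; exists n0; split; auto; rewrite e; auto.
    - right; exists (Nat.min n0 n'); split.
      + destruct (Nat.le_ge_cases n0 n'); [rewrite Nat.min_l|rewrite Nat.min_r]; auto.
      + apply agree_trans with (B (Nat.max N N'));
          [apply (agree_le _ _ n')|apply (agree_le _ _ n0)]; auto; lia. }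
  exists l; split; auto; intro j; destruct (Hconv j) as [N HN].
  destruct (HN N (le_n _)) as [<-|[n [h1 h2]]]; [apply HB|].
  exists n; rewrite <- (agree_cnt _ _ _ h2); auto.
Qed.

Lemma polish_X : polish X.
Proof.
  apply polish_coded; [exact inf_locally_prefix|exact inf_blocks_complete|].
  (* the codes (x, z 1 1 1 ...) with finitely many digits in x and z *)
  apply (separable_coded inf (fun m =>
           let (x, y) := Cantor.of_nat m in let (z, K) := Cantor.of_nat y in
           (binary x, fun k => if Nat.ltb k K then binary z k else true))).
  - intro m; destruct (Cantor.of_nat m) as [x y]; destruct (Cantor.of_nat y) as [z K].
    simpl; intro j; exists (K + j)%nat; apply cnt_tail; intros k hk.
    destruct (Nat.ltb_spec k K); auto; lia.
  - intros a b _ n; destruct (binary_prefix n a) as [x hx]; destruct (binary_prefix n b) as [z hz].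
    exists (Cantor.to_nat (x, Cantor.to_nat (z, n))); rewrite !Cantor.cancel_of_to; simpl.
    split; auto; intros k hk; destruct (Nat.ltb_spec k n); [apply hz; auto|lia].
Qed.

Definition is_zero (b : code) : Prop := b = zero.
Definition Y : Cplx -> Prop := Sp is_zero.

Lemma polish_Y : polish Y.
Proof.
  apply polish_coded.
  - intros b Hb j; exists O; intros b' Hb' _; left; unfold is_zero in *; congruence.
  - intros B HB _; exists zero; split; [reflexivity|].
    intro j; exists O; intros n _; left; apply HB.
  - apply (separable_coded is_zero (fun m => (binary m, zero))); [reflexivity|].
    intros a b Hb n; destruct (binary_prefix n a) as [x hx]; exists x; split; auto.
    rewrite Hb; apply agree_refl.
Qed.

Definition fmap (p : Cplx) : Cplx := (fst p, 0).

Lemma fmap_phi a b : fmap (phi a b) = phi a zero.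
Proof. unfold fmap, phi; simpl; rewrite c_zero; auto. Qed.

(* f is continuous and open on every coded subspace: it acts on codes by
   forgetting b, which preserves the prefix topology in both directions. *)
Lemma fmap_maps_into P : maps_into fmap (Sp P) Y.
Proof. intros x [a [b [_ ->]]]; rewrite fmap_phi; exists a, zero; split; reflexivity. Qed.

Lemma fmap_continuous P : continuous_on fmap (Sp P) Y.
Proof.
  intros V HV; apply open_char in HV as [_ HV]; apply open_char; split;
    [intros x [h _]; auto|].
  intros a b Hb [_ Hv]; rewrite fmap_phi in Hv.
  destruct (HV a zero eq_refl Hv) as [n Hn]; exists n; intros a' b' H' g1 g2.
  split; [exists a', b'; auto|]; rewrite fmap_phi; apply Hn; auto.
  - reflexivity.
  - apply agree_refl.
Qed.

Lemma fmap_open P : open_map_on fmap (Sp P) Y.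
Proof.
  intros U HU; apply open_char in HU as [HS HU]; apply open_char; split.
  - intros y [x [Hx <-]]; apply (fmap_maps_into P), HS, Hx.
  - intros a b Hb [x [Hx e]]; unfold is_zero in Hb; subst b.
    destruct (HS _ Hx) as [a1 [b1 [Hb1 ->]]]; rewrite fmap_phi in e.
    apply phi_inj in e as [-> _]; destruct (HU a b1 Hb1 Hx) as [n Hn].
    exists n; intros a' b' H' g1 g2; unfold is_zero in H'; subst b'.
    exists (phi a' b1); split; [|apply fmap_phi].
    apply Hn; auto; apply agree_refl.
Qed.

Definition ones : code := fun _ => true.

Lemma inf_ones : inf ones.
Proof. intro j; exists (0 + j)%nat; apply cnt_tail; auto. Qed.

Lemma fmap_surjective : surjective_onto fmap X Y.
Proof.
  intros y [a [b [Hb ->]]]; unfold is_zero in Hb; subst b.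
  exists (phi a ones); split; [exists a, ones; split; [apply inf_ones|reflexivity]|apply fmap_phi].
Qed.

(* f maps each cylinder of X onto the corresponding cylinder of Y, since every
   prefix of b extends to a code with infinitely many ones. *)
Lemma image_cyl a0 b0 n : image fmap (cyl inf a0 b0 n) = cyl is_zero a0 zero n.
Proof.
  apply functional_extensionality; intro p; apply propositional_extensionality; split.
  - intros [x [[a [b [_ [-> [h1 _]]]]] <-]]; rewrite fmap_phi.
    exists a, zero; repeat split; auto; apply agree_refl.
  - intros [a [b [Hb [-> [h1 _]]]]]; unfold is_zero in Hb; subst b.
    set (b := fun k => if Nat.ltb k n then b0 k else true).
    exists (phi a b); split; [|apply fmap_phi].
    exists a, b; repeat split; auto.
    + intro j; exists (n + j)%nat; apply cnt_tail; intros k hk; unfold b.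
      destruct (Nat.ltb_spec k n); auto; lia.
    + intros k hk; unfold b; destruct (Nat.ltb_spec k n); auto; lia.
Qed.

Definition dominated (b a : code) : Prop := forall k, b k = true -> a k = true.

Definition F : Cplx -> Prop := fun p => exists a b, inf b /\ p = phi a b /\ dominated b a.

Lemma F_closed : closed_in X F.
Proof.
  apply closed_char; split; [intros p [a [b [Hb [-> _]]]]; exists a, b; auto|].
  intros a b Hb Hn.
  assert (ex : exists k, b k = true /\ a k = false).
  { apply NNPP; intro h; apply Hn; exists a, b; repeat split; auto; intros k hk.
    destruct (a k) eqn:E; auto; exfalso; apply h; eauto. }
  destruct ex as [k [h1 h2]]; exists (S k); intros a' b' H' g1 g2 [a1 [b1 [_ [e h]]]].
  apply phi_inj in e as [<- <-].
  specialize (h k); rewrite <- (g1 k), <- (g2 k) in h by lia; rewrite (h h1) in h2; discriminate.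
Qed.

Definition InfY : Cplx -> Prop := fun p => exists a, inf a /\ p = phi a zero.

Lemma cnt_dominated a b n : dominated b a -> (cnt b n <= cnt a n)%nat.
Proof.
  intro H; induction n; simpl; auto.
  destruct (b n) eqn:E; [rewrite (H n E); lia|destruct (a n); lia].
Qed.

(* f(F) is InfY: witnessing a with infinitely many ones, take b = a. *)
Lemma image_F : image fmap F = InfY.
Proof.
  apply functional_extensionality; intro p; apply propositional_extensionality; split.
  - intros [x [[a [b [Hb [-> H]]]] <-]]; rewrite fmap_phi; exists a; split; auto.
    intro j; destruct (Hb j) as [n hn]; exists n; pose proof (cnt_dominated a b n H); lia.
  - intros [a [Ha ->]]; exists (phi a a); split; [|apply fmap_phi].
    exists a, a; repeat split; auto; intros k hk; auto.
Qed.

Lemma eventually_zero_not_inf a l : (forall k, (l <= k)%nat -> a k = false) -> ~ inf a.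
Proof.
  intros H Hinf; destruct (Hinf (S (cnt a l))) as [m hm].
  assert (cnt a m <= cnt a l)%nat; [|lia].
  destruct (Nat.le_ge_cases m l) as [h|h]; [apply cnt_mono; auto|].
  induction h; auto; simpl; rewrite H by lia; lia.
Qed.

(* InfY is not F_sigma in Y: given closed sets Fn covering it, build by
   induction finite codes a_n (vanishing from l_n on, with at least n ones)
   such that the cylinder of a_(n+1) misses Fn n; their limit has infinitely
   many ones yet lies in no Fn. *)
Section Baire.
Variable Fn : nat -> Cplx -> Prop.
Hypothesis Fn_closed : forall n, closed_in Y (Fn n).
Hypothesis Fn_cover : forall x, InfY x <-> exists n, Fn n x.

Definition stage (n : nat) (s : code * nat) : Prop :=
  (forall k, (snd s <= k)%nat -> fst s k = false) /\ (n <= cnt (fst s) (snd s))%nat.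

Definition refines (n : nat) (s s' : code * nat) : Prop :=
  stage (S n) s' /\ (snd s < snd s')%nat /\ agree (fst s) (fst s') (snd s) /\
  forall x, agree (fst s') x (snd s') -> ~ Fn n (phi x zero).

Lemma refine_exists n s : stage n s -> exists s', refines n s s'.
Proof.
  destruct s as [a l]; intros [H1 H2]; simpl in *.
  assert (Hni : ~ Fn n (phi a zero)).
  { intro h; destruct (proj2 (Fn_cover _) (ex_intro _ n h)) as [a' [Ha' e]].
    apply phi_inj in e as [<- _]; eapply eventually_zero_not_inf; eauto. }
  destruct (proj1 (closed_char _ _) (Fn_closed n)) as [_ Hc].
  destruct (Hc a zero eq_refl Hni) as [m Hm].
  (* put a one at position p beyond both l and m *)
  set (p := Nat.max m l); set (a' := fun k => if Nat.eqb k p then true else a k).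
  assert (Hag : agree a a' p) by (intros k hk; unfold a'; destruct (Nat.eqb_spec k p); auto; lia).
  exists (a', S p); repeat split; simpl.
  - intros k hk; unfold a'; destruct (Nat.eqb_spec k p); [lia|]; apply H1; lia.
  - rewrite <- (agree_cnt _ _ _ Hag); unfold a'; rewrite Nat.eqb_refl.
    pose proof (cnt_mono a l p ltac:(lia)); lia.
  - lia.
  - apply (agree_le _ _ p); auto; lia.
  - intros x hx; apply Hm; [reflexivity| |apply agree_refl].
    intros k hk; rewrite (Hag k) by lia; apply hx; lia.
Qed.

Fixpoint stages (n : nat) : code * nat :=
  match n with
  | O => (zero, O)
  | S n => epsilon (inhabits (zero, O)) (refines n (stages n))
  end.

Lemma stages_spec n : stage n (stages n) /\ refines n (stages n) (stages (S n)).
Proof.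
  assert (H : forall k, stage k (stages k)).
  { induction k as [|k IH]; [split; simpl; auto; lia|]; cbn [stages].
    apply (epsilon_spec (inhabits (zero, O)) (refines k (stages k))), refine_exists; auto. }
  split; auto; cbn [stages].
  apply (epsilon_spec (inhabits (zero, O)) (refines n (stages n))), refine_exists; auto.
Qed.

Definition len (n : nat) : nat := snd (stages n).

Lemma len_ge n : (n <= len n)%nat.
Proof. induction n; unfold len in *; [lia|]; destruct (stages_spec n) as [_ [_ [h _]]]; lia. Qed.

Lemma len_mono p q : (p <= q)%nat -> (len p <= len q)%nat.
Proof. induction 1; auto; destruct (stages_spec m) as [_ [_ [h _]]]; unfold len in *; lia. Qed.

Lemma stages_agree p q : (p <= q)%nat -> agree (fst (stages p)) (fst (stages q)) (len p).
Proof.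
  induction 1; [apply agree_refl|].
  destruct (stages_spec m) as [_ [_ [_ [h _]]]]; apply agree_trans with (fst (stages m)); auto.
  apply (agree_le _ _ (len m)); auto; apply len_mono; auto.
Qed.

Definition limit_code : code := fun i => fst (stages (S i)) i.

Lemma limit_code_agree n : agree (fst (stages n)) limit_code (len n).
Proof.
  intros i hi; unfold limit_code; destruct (Nat.le_ge_cases (S i) n) as [h|h].
  - symmetry; apply (stages_agree _ _ h); pose proof (len_ge (S i)); lia.
  - apply (stages_agree _ _ h); auto.
Qed.

Lemma Fsigma_cover_absurd : False.
Proof.
  assert (Hinf : inf limit_code).
  { intro j; exists (len j); rewrite <- (agree_cnt _ _ _ (limit_code_agree j)); apply stages_spec. }
  destruct (proj1 (Fn_cover _) (ex_intro _ limit_code (conj Hinf eq_refl))) as [n Hn].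
  destruct (stages_spec n) as [_ [_ [_ [_ h]]]]; apply (h limit_code); auto.
  apply limit_code_agree.
Qed.
End Baire.

Lemma InfY_not_Fsigma : ~ Fsigma_in Y InfY.
Proof. intros [Fn [HFc HFeq]]; exact (Fsigma_cover_absurd Fn HFc HFeq). Qed.

Theorem mainTheorem4 :
  exists (IX IY : Cplx -> Prop) (Bs : (Cplx -> Prop) -> Prop) (f : Cplx -> Cplx),
    polish IX /\ polish IY /\
    is_base IX Bs /\ (forall B, Bs B -> clopen_in IX B) /\
    maps_into f IX IY /\ continuous_on f IX IY /\ open_map_on f IX IY /\
    surjective_onto f IX IY /\
    (forall B, Bs B -> clopen_in IY (image f B)) /\
    exists F, closed_in IX F /\ ~ Fsigma_in IY (image f F).
Proof.
  exists X, Y, (fun B => exists a0 b0 n, B = cyl inf a0 b0 n), fmap.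
  split; [exact polish_X|]; split; [exact polish_Y|].
  split; [apply cyl_base|].
  split; [intros B [a0 [b0 [n ->]]]; apply cyl_clopen|].
  split; [apply fmap_maps_into|]; split; [apply fmap_continuous|].
  split; [apply fmap_open|]; split; [exact fmap_surjective|].
  split; [intros B [a0 [b0 [n ->]]]; rewrite image_cyl; apply cyl_clopen|].
  exists F; split; [exact F_closed|]; rewrite image_F; exact InfY_not_Fsigma.
Qed.
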